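(* Let $n\ge1$. Let $|\Psi\rangle=\frac{1}{\sqrt2}(|01\rangle+|10\rangle)$ on a pair of qubits (first qubit Bob's, second Charlie's). For $x\in\{0,1\}^n$ define the $2n$-qubit state $|\tilde x\rangle=\bigotimes_{i=1}^n|\tilde x_i\rangle$, where $|\tilde x_i\rangle=|00\rangle$ if $x_i=0$ and $|\tilde x_i\rangle=|\Psi\rangle$ if $x_i=1$, the $i$-th pair consisting of Bob's $i$-th qubit and Charlie's $i$-th qubit. Let $A$ be any operator on Bob's $n$ qubits, and write $|x\rangle$ for Bob's computational basis state labeled by $x$. Then: (i) For $x,y\in\{0,1\}^n$, let $S=\{b\in\{0,1\}^n: b_i=0 \text{ whenever } x_iy_i\ne1\}$. Then $\langle\tilde x|A\otimes\mathbb I|\tilde y\rangle=c_{x,y}\sum_{b\in S}\langle x+b|A|y+b\rangle$ for a nonzero constant $c_{x,y}$ independent of $A$ (addition mod 2 componentwise). (ii) If $\langle\tilde x|A\otimes\mathbb I|\tilde y\rangle=0$ for all $x\ne y\in\{0,1\}^n$, then $\langle x|A|y\rangle=0$ for all $x\neq y\in\{0,1\}^n$. (iii) If $\langle\tilde x|A\otimes\mathbb I|\tilde x\rangle=k$ for all $x\in\{0,1\}^n$, then $\langle x|A|x\rangle=k$ for all $x\in\{0,1\}^n$.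
   Context: $\mathbb I$ denotes the identity on Charlie's $n$ qubits. For binary strings, $x+b$ denotes componentwise addition modulo 2. *)

From HB Require Import structures.
From mathcomp Require Import all_boot all_order all_algebra all_field all_character.
Set Implicit Arguments. Unset Strict Implicit. Unset Printing Implicit Defensive.
Import Order.TTheory GRing.Theory Num.Theory.
Local Open Scope ring_scope.

Definition bits (n : nat) := {ffun 'I_n -> bool}.

Definition bxor n (x b : bits n) : bits n := [ffun i => x i (+) b i].

(* An operator on a finite-dimensional space with orthonormal basis indexed
   by the finite type I, given by its matrix entries  <p|M|q> = M p q. *)
Definition operator (I : finType) := I -> I -> algC.
Definition ket (I : finType) := I -> algC.

Definition braket (I : finType) (u : ket I) (M : operator I) (v : ket I) : algC :=
  \sum_(p : I) \sum_(q : I) (u p)^* * M p q * v q.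

Definition basis_ket (I : finType) (x : I) : ket I := fun p => (p == x)%:R.

(* Joint Bob+Charlie basis: (Bob's bit string, Charlie's bit string);
   the i-th pair is (Bob's i-th qubit, Charlie's i-th qubit). *)
Definition BC (n : nat) := (bits n * bits n)%type.

(* A (x) I : A acts on Bob's register, identity on Charlie's. *)
Definition tensorI n (A : operator (bits n)) : operator (BC n) :=
  fun p q => A p.1 q.1 * (p.2 == q.2)%:R.

Definition psi_amp (b c : bool) : algC := if b != c then (sqrtC 2)^-1 else 0.

Definition pair_amp (xi b c : bool) : algC :=
  if xi then psi_amp b c else (~~ b && ~~ c)%:R.

Definition xtilde n (x : bits n) : ket (BC n) :=
  fun p => \prod_(i < n) pair_amp (x i) (p.1 i) (p.2 i).

Definition Sxy n (x y : bits n) : {set bits n} :=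
  [set b : bits n | [forall i, ~~ (x i && y i) ==> ~~ b i]].

From HB Require Import structures.
From mathcomp Require Import all_boot all_order all_algebra all_field.
Import Order.TTheory GRing.Theory Num.Theory.
Local Open Scope ring_scope.
Set Implicit Arguments. Unset Strict Implicit. Unset Printing Implicit Defensive.

(* Proof of Lemma 2.
   (i) Write <x~| A (x) I |y~> in the joint basis of Bob and Charlie and sum out
   Charlie's register: the entry A b1 b2 gets the weight
   sum_c <x~|b1 c><b2 c|y~>, which factors over the n pairs into one-qubit
   overlaps sum_c <x_i~|b1_i c><b2_i c|y_i~>.  A direct check of the 16 cases
   shows that such an overlap is a nonzero constant pair_weight x_i y_i times
   the number of bits c with b1_i = x_i + c, b2_i = y_i + c, and c = 0 unless
   x_i = y_i = 1.  The product of these counts is the number of shifts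
   b in S(x,y) with (x + b, y + b) = (b1, b2), so the weights on both sides of
   (i) agree up to the constant c_{x,y} = prod_i pair_weight x_i y_i.
   (ii), (iii) A nonzero shift b in S(x,y) strictly decreases the number of
   common ones of x and y, so a strong induction on that number
   (zero_by_shift_induction) turns "every S(x,y)-sum vanishes" into "every
   entry vanishes".  This gives (ii) directly, and (iii) applied to A - k,
   using |S(x,x)| * c_{x,x} = 1. *)

Lemma prod_nat_indicator (R : comNzRingType) (I : finType) (P : pred I) :
  \prod_(i : I) ((P i)%:R : R) = ([forall i, P i])%:R.
Proof.
case: (boolP [forall i, P i]) => [/forallP allP|/forallPn [i notPi]].
  by rewrite big1 // => i _; rewrite allP.
by rewrite (bigD1 i) //= (negbTE notPi) mul0r.
Qed.

Lemma braket_basis (I : finType) (u v : I) (A : operator I) :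
  braket (basis_ket u) A (basis_ket v) = A u v.
Proof.
rewrite /braket (bigD1 u) //= [X in _ + X]big1 => [|p neq_pu]; last first.
  by rewrite big1 // => q _; rewrite /basis_ket (negbTE neq_pu) conjC0 !mul0r.
rewrite addr0 (bigD1 v) //= [X in _ + X]big1 => [|q neq_qv]; last first.
  by rewrite /basis_ket (negbTE neq_qv) mulr0.
by rewrite /basis_ket !eqxx conjC1 mul1r mulr1 addr0.
Qed.

Lemma braket_tensorI n (u v : ket (BC n)) (A : operator (bits n)) :
  braket u (tensorI A) v =
  \sum_(b1 : bits n) \sum_(b2 : bits n)
    A b1 b2 * \sum_(c : bits n) (u (b1, c))^* * v (b2, c).
Proof.
rewrite /braket; transitivity (\sum_(b1 : bits n) \sum_(c : bits n)
    \sum_(b2 : bits n) \sum_(c' : bits n)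
      (u (b1, c))^* * tensorI A (b1, c) (b2, c') * v (b2, c')).
  rewrite [RHS]pair_bigA; apply: eq_bigr => -[b1 c] _ /=.
  by rewrite [RHS]pair_bigA; apply: eq_bigr => -[b2 c'] _.
apply: eq_bigr => b1 _; rewrite exchange_big /=; apply: eq_bigr => b2 _.
rewrite mulr_sumr; apply: eq_bigr => c _.
rewrite (bigD1 c) //= big1 => [|c' neq_c'c]; last first.
  by rewrite /tensorI /= eq_sym (negbTE neq_c'c) !mulr0 mul0r.
by rewrite addr0 /tensorI /= eqxx mulr1 mulrCA mulrA.
Qed.

Lemma pair_amp_conj (a b c : bool) : (pair_amp a b c)^* = pair_amp a b c.
Proof.
have conj_inv_sqrt2 : ((sqrtC 2)^-1)^* = (sqrtC 2)^-1 :> algC.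
  by apply: geC0_conj; rewrite invr_ge0 sqrtC_ge0 ler0n.
by rewrite /pair_amp /psi_amp; case: a b c => [] [] [] //=;
  rewrite ?conj_inv_sqrt2 ?conjC0 ?conjC_nat.
Qed.

Lemma xtilde_partial_overlap n (x y b1 b2 : bits n) :
  \sum_(c : bits n) (xtilde x (b1, c))^* * xtilde y (b2, c) =
  \prod_(i < n) \sum_(c : bool) pair_amp (x i) (b1 i) c * pair_amp (y i) (b2 i) c.
Proof.
rewrite (bigA_distr_bigA (fun i c => pair_amp (x i) (b1 i) c * pair_amp (y i) (b2 i) c)).
apply: eq_bigr => c _; rewrite /xtilde rmorph_prod -big_split /=.
by apply: eq_bigr => i _; rewrite pair_amp_conj.
Qed.

Definition shift_bit (a a' u v c : bool) : bool :=
  [&& ~~ (a && a') ==> ~~ c, a (+) c == u & a' (+) c == v].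

Lemma shift_bits_all n (x y c b1 b2 : bits n) :
  [forall i, shift_bit (x i) (y i) (b1 i) (b2 i) (c i)] =
  [&& c \in Sxy x y, bxor x c == b1 & bxor y c == b2].
Proof.
rewrite /Sxy inE /shift_bit.
apply/forallP/and3P => [all_i|[/forallP inS /eqP <- /eqP <-] i].
  split.
  - by apply/forallP => i; case/and3P: (all_i i).
  - by apply/eqP/ffunP => i; rewrite ffunE; case/and3P: (all_i i) => _ /eqP.
  - by apply/eqP/ffunP => i; rewrite ffunE; case/and3P: (all_i i) => _ _ /eqP.
by rewrite !ffunE !eqxx (inS i).
Qed.

(* The shifted sum of (i), rewritten as a weighted sum over all entries of A;
   the weight of A b1 b2 counts the shifts in S(x,y) reaching (b1, b2). *)
Lemma shift_sum_expand n (x y : bits n) (A : operator (bits n)) :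
  \sum_(b in Sxy x y) A (bxor x b) (bxor y b) =
  \sum_(b1 : bits n) \sum_(b2 : bits n) A b1 b2 *
    \prod_(i < n) \sum_(c : bool) ((shift_bit (x i) (y i) (b1 i) (b2 i) c)%:R : algC).
Proof.
under [RHS]eq_bigr => b1 _ do under eq_bigr => b2 _ do
  rewrite (bigA_distr_bigA (fun i c => ((shift_bit (x i) (y i) (b1 i) (b2 i) c)%:R : algC)))
          mulr_sumr.
under [RHS]eq_bigr => b1 _ do rewrite exchange_big.
rewrite [RHS]exchange_big /= [LHS]big_mkcond /=; apply: eq_bigr => c _.
under eq_bigr => b1 _ do under eq_bigr => b2 _ do
  rewrite (prod_nat_indicator _ (fun i => shift_bit _ _ _ _ (c i))) shift_bits_all.
case: (boolP (c \in Sxy x y)) => c_in /=; last first.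
  by rewrite big1 // => b1 _; rewrite big1 // => b2 _; rewrite mulr0.
rewrite (bigD1 (bxor x c)) //= [X in _ + X]big1 => [|b1 neq_b1]; last first.
  by rewrite big1 // => b2 _; rewrite eq_sym (negbTE neq_b1) mulr0.
rewrite addr0 (bigD1 (bxor y c)) //= [X in _ + X]big1 => [|b2 neq_b2]; last first.
  by rewrite eq_sym (negbTE neq_b2) andbF mulr0.
by rewrite !eqxx mulr1 addr0.
Qed.

Definition inv_sqrt2 : algC := (sqrtC 2)^-1.
Definition pair_weight (a a' : bool) : algC :=
  (if a then inv_sqrt2 else 1) * (if a' then inv_sqrt2 else 1).

Definition overlap_const n (x y : bits n) : algC :=
  \prod_(i < n) pair_weight (x i) (y i).

Lemma inv_sqrt2_neq0 : inv_sqrt2 != 0.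
Proof. by rewrite invr_eq0 sqrtC_eq0 pnatr_eq0. Qed.

Lemma overlap_const_neq0 n (x y : bits n) : overlap_const x y != 0.
Proof.
rewrite prodf_seq_neq0; apply/allP => i _ /=.
by rewrite mulf_neq0 //; case: ifP => _; rewrite ?inv_sqrt2_neq0 ?oner_neq0.
Qed.

Lemma pair_overlap (a a' u v : bool) :
  \sum_(c : bool) pair_amp a u c * pair_amp a' v c =
  pair_weight a a' * \sum_(c : bool) ((shift_bit a a' u v c)%:R : algC).
Proof.
rewrite !big_bool /pair_weight /shift_bit /pair_amp /psi_amp /inv_sqrt2.
by case: a a' u v => [] [] [] [] /=;
  rewrite ?(mulr0n, mulr1n, mulr0, mul0r, mulr1, mul1r, addr0, add0r).
Qed.

Lemma xtilde_braket n (x y : bits n) (A : operator (bits n)) :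
  braket (xtilde x) (tensorI A) (xtilde y) =
  overlap_const x y *
    \sum_(b in Sxy x y) braket (basis_ket (bxor x b)) A (basis_ket (bxor y b)).
Proof.
under [in RHS]eq_bigr => b _ do rewrite braket_basis.
rewrite braket_tensorI shift_sum_expand mulr_sumr; apply: eq_bigr => b1 _.
rewrite mulr_sumr; apply: eq_bigr => b2 _.
rewrite xtilde_partial_overlap mulrCA -big_split /=; congr (_ * _).
by apply: eq_bigr => i _; rewrite pair_overlap.
Qed.

Definition bits0 n : bits n := [ffun=> false].
Definition common_ones n (x y : bits n) : nat := #|[set i | x i && y i]|.

Lemma bxor0 n (x : bits n) : bxor x (bits0 n) = x.
Proof. by apply/ffunP => i; rewrite !ffunE addbF. Qed.

Lemma bits0_in_Sxy n (x y : bits n) : bits0 n \in Sxy x y.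
Proof. by rewrite inE; apply/forallP => i; rewrite ffunE implybT. Qed.

Lemma bxor_inj n (b : bits n) : injective (fun x : bits n => bxor x b).
Proof.
move=> x y /ffunP eq_xy; apply/ffunP => i.
by move: (eq_xy i); rewrite !ffunE => /(congr1 (addb^~ (b i))); rewrite -!addbA addbb !addbF.
Qed.

(* A nonzero shift in S(x,y) flips some common one of x and y to zero,
   and creates no new common one. *)
Lemma common_ones_shift n (x y b : bits n) : b \in Sxy x y -> b != bits0 n ->
  (common_ones (bxor x b) (bxor y b) < common_ones x y)%N.
Proof.
rewrite inE => /forallP b_in b_neq0.
have /forallPn [i] : ~~ [forall i, ~~ b i].
  apply: contra b_neq0 => /forallP b_false.
  by apply/eqP/ffunP => i; rewrite ffunE; apply/negbTE/b_false.
rewrite negbK => b_i.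
apply: proper_card; apply/properP; split.
  apply/subsetP => j; rewrite !inE !ffunE.
  by move: (b_in j); case: (x j) (y j) (b j) => [] [] [].
by exists i; rewrite !inE ?ffunE; move: (b_in i) b_i; case: (x i) (y i) (b i) => [] [] [].
Qed.

(* Strong induction on common ones: if, for every pair (x,y) in a shift-stable
   family P, the S(x,y)-shifted sum of F vanishes, then F vanishes on P.
   Indeed the b = 0 term of the sum is F x y and all other terms have fewer
   common ones. *)
Lemma zero_by_shift_induction (V : zmodType) n (P : bits n -> bits n -> bool)
    (F : bits n -> bits n -> V) :
  (forall x y, P x y -> \sum_(b in Sxy x y) F (bxor x b) (bxor y b) = 0) ->
  (forall x y b, P x y -> P (bxor x b) (bxor y b)) ->
  forall x y, P x y -> F x y = 0.
Proof.
move=> sum0 P_shift x y.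
elim: {x y}(common_ones x y).+1 {-2}x {-2}y (ltnSn (common_ones x y)) => // m IH x y lt_m Pxy.
have := sum0 x y Pxy; rewrite (bigD1 (bits0 n)) ?bits0_in_Sxy //= !bxor0.
rewrite big1 ?addr0 // => b /andP[b_in b_neq0].
apply: IH; last exact: P_shift.
by rewrite -ltnS (leq_trans _ lt_m) // ltnS common_ones_shift.
Qed.

(* Normalisation on the diagonal: |S(x,x)| * c_{x,x} = 1, since each pair with
   x_i = 1 contributes 2 shifts and weight 1/2. *)
Lemma card_Sxx_overlap_const n (x : bits n) :
  #|Sxy x x|%:R * overlap_const x x = 1.
Proof.
have -> : (#|Sxy x x|%:R : algC) =
          \prod_(i < n) \sum_(c : bool) ((~~ (x i && x i) ==> ~~ c)%:R : algC).
  rewrite (bigA_distr_bigA (fun i c => ((~~ (x i && x i) ==> ~~ c)%:R : algC))) /=.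
  rewrite -sum1_card natr_sum [LHS]big_mkcond /=; apply: eq_bigr => b _.
  by rewrite prod_nat_indicator inE; case: ifP.
rewrite -big_split /=; apply: big1 => i _.
rewrite big_bool /pair_weight /inv_sqrt2; case: (x i) => /=; last first.
  by rewrite !mulr1 add0r.
by rewrite -invfM -expr2 sqrtCK -[1 + 1]/(2%:R : algC) mulfV // pnatr_eq0.
Qed.

Theorem lemma2 (n : nat) (hn : (1 <= n)%N) :
  (forall x y : bits n, exists c : algC, c != 0 /\
     forall A : operator (bits n),
       braket (xtilde x) (tensorI A) (xtilde y) =
       c * \sum_(b in Sxy x y)
             braket (basis_ket (bxor x b)) A (basis_ket (bxor y b)))
  /\
  (forall A : operator (bits n),
     (forall x y : bits n, x != y ->
        braket (xtilde x) (tensorI A) (xtilde y) = 0) ->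
     forall x y : bits n, x != y ->
        braket (basis_ket x) A (basis_ket y) = 0)
  /\
  (forall (A : operator (bits n)) (k : algC),
     (forall x : bits n, braket (xtilde x) (tensorI A) (xtilde x) = k) ->
     forall x : bits n, braket (basis_ket x) A (basis_ket x) = k).
Proof.
have shifted_sum x y (A : operator (bits n)) :
    braket (xtilde x) (tensorI A) (xtilde y) =
    overlap_const x y * \sum_(b in Sxy x y) A (bxor x b) (bxor y b).
  by rewrite xtilde_braket; under eq_bigr => b _ do rewrite braket_basis.
split; [|split].
- move=> x y; exists (overlap_const x y).
  by split; [exact: overlap_const_neq0 | exact: xtilde_braket].
- move=> A offdiag0 x y neq_xy; rewrite braket_basis.
  apply: (zero_by_shift_induction (P := fun x y => x != y)) neq_xy.
    move=> x1 y1 /offdiag0 /eqP; rewrite shifted_sum mulf_eq0.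
    by rewrite (negbTE (overlap_const_neq0 _ _)) => /eqP.
  by move=> x1 y1 b; rewrite (inj_eq (@bxor_inj n b)).
- move=> A k diag_k x; rewrite braket_basis; apply/eqP; rewrite -subr_eq0; apply/eqP.
  apply: (zero_by_shift_induction (P := fun x y => x == y) (F := fun x y => A x y - k))
    (eqxx x); last by move=> x1 y1 b /eqP ->.
  move=> x1 _ /eqP <-; apply: (mulIf (overlap_const_neq0 x1 x1)).
  rewrite mul0r sumrB sumr_const mulrBl mulrC -shifted_sum diag_k.
  by rewrite -mulr_natr -mulrA card_Sxx_overlap_const mulr1 subrr.
Qed.
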